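(* For every $n>8$, if $\Delta,\Delta'\in\mathcal{P}_n$ form a special pair for rule $160$, then $lab_\Delta$ and $lab_{\Delta'}$ differ on exactly one arc among the $2n$ arcs $(i,i+1)$, $(i+1,i)$, $i\in\mathbb{Z}_n$.
   Context: Cells are indexed by $\mathbb{Z}_n=\{0,\dots,n-1\}$, indices modulo $n$. Rule $160$ has local rule $r_{160}(x_1,x_2,x_3)=x_1\wedge x_3$ and global function $f_{160,n}(x)_i=r_{160}(x_{i-1},x_i,x_{i+1})$. An update schedule is an ordered partition $\Delta=(\Delta_1,\dots,\Delta_k)$ of $\mathbb{Z}_n$ into nonempty blocks; $\mathcal{P}_n$ is the set of them. For a block $B$ let $f^{(B)}(x)_i=f_{160,n}(x)_i$ if $i\in B$ and $x_i$ otherwise; $f^{(\Delta)}_{160,n}=f^{(\Delta_k)}\circ\cdots\circ f^{(\Delta_1)}$. For $u,v\in\mathbb{Z}_n$ with $u\in\Delta_a$, $v\in\Delta_b$, $lab_\Delta((u,v))=\oplus$ if $b\le a$ and $\ominus$ if $a<b$. $\Delta\equiv\Delta'$ iff $lab_\Delta$ and $lab_{\Delta'}$ agree on every arc $(i,i+1)$ and $(i+1,i)$. A pair $\Delta,\Delta'$ is special for rule $160$ if $\Delta\not\equiv\Delta'$ but $f^{(\Delta)}_{160,n}=f^{(\Delta')}_{160,n}$. *)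

From mathcomp Require Import all_boot.
Set Implicit Arguments. Unset Strict Implicit. Unset Printing Implicit Defensive.

Lemma ord_pos n (i : 'I_n) : 0 < n.
Proof. exact: leq_ltn_trans (leq0n i) (ltn_ord i). Qed.

Definition nxt n (i : 'I_n) : 'I_n := Ordinal (ltn_pmod i.+1 (ord_pos i)).
Definition prv n (i : 'I_n) : 'I_n := Ordinal (ltn_pmod (i + n.-1) (ord_pos i)).

Definition config n := {ffun 'I_n -> bool}.

Definition f160 n (x : config n) : config n :=
  [ffun i => x (prv i) && x (nxt i)].

(* An ordered partition (Delta_1,...,Delta_k) of Z_n into nonempty blocks is
   encoded by a surjective map d : 'I_n -> 'I_k, with i in Delta_{j+1} iff d i = j. *)
Definition ordered_partition n k (d : 'I_n -> 'I_k) : Prop :=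
  forall j : 'I_k, exists i : 'I_n, d i = j.

Definition block_update n k (d : 'I_n -> 'I_k) (j : 'I_k) (x : config n) : config n :=
  [ffun i => if d i == j then f160 x i else x i].

Definition f160_sched n k (d : 'I_n -> 'I_k) (x : config n) : config n :=
  foldl (fun y j => block_update d j y) x (enum 'I_k).

(* lab_Delta((u,v)) = (+) (true) iff block(v) <= block(u); (-) (false) otherwise *)
Definition lab n k (d : 'I_n -> 'I_k) (u v : 'I_n) : bool := (d v <= d u)%N.

Definition sched_equiv n k k' (d : 'I_n -> 'I_k) (d' : 'I_n -> 'I_k') : Prop :=
  forall i : 'I_n, lab d i (nxt i) = lab d' i (nxt i) /\ lab d (nxt i) i = lab d' (nxt i) i.

Definition special160 n k k' (d : 'I_n -> 'I_k) (d' : 'I_n -> 'I_k') : Prop :=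
  ~ sched_equiv d d' /\ f160_sched d =1 f160_sched d'.

Definition n_diff_arcs n k k' (d : 'I_n -> 'I_k) (d' : 'I_n -> 'I_k') : nat :=
  #|[set i : 'I_n | lab d i (nxt i) != lab d' i (nxt i)]|
  + #|[set i : 'I_n | lab d (nxt i) i != lab d' (nxt i) i]|.

From mathcomp Require Import all_boot zify.
Set Implicit Arguments. Unset Strict Implicit. Unset Printing Implicit Defensive.

(* Let lrun i (resp. rrun i) be the number of consecutive steps one can walk
   left (resp. right) from cell i, each step reaching a cell updated strictly
   earlier.  Unfolding the sequential updates, f^(Delta)(x)_i is the
   conjunction of x over the cells i-lrun-1, i+rrun+1 and a block of cells
   around i determined by lrun and rrun; testing on configurations with a
   single 0 shows that schedules with the same global function have the same
   such dependency sets at every cell.  If the label of an arc (i-1, i)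
   differs between the two schedules, comparing the dependency sets at i and
   i-1 forces both into a rigid shape: the block index strictly decreases
   along the n-4 steps to the right of i.  Two such shapes at different cells
   contradict each other, and a flipped arc (i-1, i) together with a flipped
   arc (j+1, j) would leave at most 4 cells updated after their left
   neighbour and at most 4 others, so n <= 8.  The reflection i |-> -i
   exchanges the two kinds of arcs. *)

Ltac case_ifs :=
  repeat match goal with |- context[if ?b then _ else _] =>
    lazymatch b with context[if _ then _ else _] => fail | _ => case: (boolP b) => ? end end.

Section Cycle.
Variable n : nat.
Implicit Types i j p : 'I_n.

Lemma val_nxt i : nxt i = (if i.+1 == n then 0 else i.+1) :> nat.
Proof.
rewrite /nxt /=; have := ltn_ord i; case: eqP => [->|ne] lt; first by rewrite modnn.
by rewrite modn_small //; lia.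
Qed.

Lemma val_prv i : prv i = (if i == 0 :> nat then n.-1 else i.-1) :> nat.
Proof.
rewrite /prv /=; have := ltn_ord i; case: eqP => [->|ne] lt.
  by rewrite add0n modn_small //; lia.
have -> : i + n.-1 = i.-1 + n by lia.
by rewrite modnDr modn_small //; lia.
Qed.

Lemma nxtK : cancel (@nxt n) (@prv n).
Proof. by move=> i; apply: ord_inj; rewrite val_prv val_nxt; have := ltn_ord i; case_ifs; lia. Qed.
Lemma prvK : cancel (@prv n) (@nxt n).
Proof. by move=> i; apply: ord_inj; rewrite val_nxt val_prv; have := ltn_ord i; case_ifs; lia. Qed.

Lemma nxt_inj : injective (@nxt n).
Proof. exact: can_inj nxtK. Qed.

Lemma val_iter_nxt j t : iter t (@nxt n) j = (j + t) %% n :> nat.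
Proof.
elim: t => [|t IH]; first by rewrite addn0 modn_small.
by rewrite iterS /nxt /= IH -[((j + t) %% n).+1]addn1 modnDml addn1 addnS.
Qed.

Lemma iter_nxt_n j : iter n (@nxt n) j = j.
Proof. by apply: ord_inj; rewrite val_iter_nxt addnC modnDl modn_small. Qed.

Lemma iter_nxt_prv t j : iter t (@nxt n) (iter t (@prv n) j) = j.
Proof. by elim: t => [|t IH] //; rewrite iterSr iterS prvK. Qed.

Lemma iter_prv_nxt t j : iter t (@prv n) (iter t (@nxt n) j) = j.
Proof. by elim: t => [|t IH] //; rewrite iterSr iterS nxtK. Qed.

Lemma iter_prv_n j : iter n (@prv n) j = j.
Proof. by rewrite -{2}(iter_nxt_prv n j) iter_nxt_n. Qed.

Lemma iter_nxt_pred j : iter n.-1 (@nxt n) j = prv j.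
Proof. by rewrite -{1}(prvK j) -iterSr prednK ?iter_nxt_n // (ord_pos j). Qed.

Definition mirror i : 'I_n := Ordinal (ltn_pmod (n - i) (ord_pos i)).

Lemma val_mirror i : mirror i = (if i == 0 :> nat then 0 else n - i) :> nat.
Proof.
rewrite /mirror /=; have := ltn_ord i; case: eqP => [->|ne] lt; first by rewrite subn0 modnn.
by rewrite modn_small //; lia.
Qed.

Lemma mirrorK : involutive mirror.
Proof. by move=> i; apply: ord_inj; rewrite !val_mirror; have := ltn_ord i; case_ifs; lia. Qed.

Lemma nxt_mirror i : nxt (mirror i) = mirror (prv i).
Proof.
by apply: ord_inj; rewrite val_nxt !val_mirror val_prv; have := ltn_ord i; case_ifs; lia.
Qed.

Lemma prv_mirror i : prv (mirror i) = mirror (nxt i).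
Proof. by rewrite -[in LHS](nxtK i) -nxt_mirror nxtK. Qed.

Lemma iter_nxt_mirror t i : iter t (@nxt n) (mirror i) = mirror (iter t (@prv n) i).
Proof. by elim: t => [|t IH] //; rewrite !iterS IH nxt_mirror. Qed.
End Cycle.

Section Offset.
Variable n : nat.
Implicit Types i j p : 'I_n.

Definition offset i p : nat := if i <= p then p - i else p + n - i.

Lemma offset_lt i p : offset i p < n.
Proof. by rewrite /offset; have := ltn_ord i; have := ltn_ord p; case_ifs; lia. Qed.

Lemma offset_prv i p : offset (prv i) p = if offset i p == n.-1 then 0 else (offset i p).+1.
Proof. by rewrite /offset val_prv; have := ltn_ord i; have := ltn_ord p; case_ifs; lia. Qed.

Lemma offset_nxt i p : offset (nxt i) p = if offset i p == 0 then n.-1 else (offset i p).-1.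
Proof. by rewrite /offset val_nxt; have := ltn_ord i; have := ltn_ord p; case_ifs; lia. Qed.

Lemma prv_eq_offset i p : (prv i == p) = (offset i p == n.-1).
Proof.
rewrite -[_ == p]/(nat_of_ord _ == p :> nat) val_prv /offset.
by have := ltn_ord i; have := ltn_ord p; case_ifs; lia.
Qed.

Lemma nxt_eq_offset i p : 1 < n -> (nxt i == p) = (offset i p == 1).
Proof.
rewrite -[_ == p]/(nat_of_ord _ == p :> nat) val_nxt /offset.
by have := ltn_ord i; have := ltn_ord p; case_ifs; lia.
Qed.

Lemma iter_offset i j : iter (offset i j) (@nxt n) i = j.
Proof.
apply: ord_inj; rewrite val_iter_nxt /offset; have := ltn_ord i; have := ltn_ord j.
case: ifP => le_ij lt_j lt_i; first by rewrite subnKC // modn_small.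
have -> : i + (j + n - i) = j + n by lia.
by rewrite modnDr modn_small.
Qed.

Lemma offset_iter i o : o < n -> offset i (iter o (@nxt n) i) = o.
Proof.
move=> lt_o; rewrite /offset val_iter_nxt; have := ltn_ord i.
case: (ltnP (i + o) n) => h lt_i; first by rewrite modn_small //; case_ifs; lia.
have -> : i + o = (i + o - n) + n by lia.
by rewrite modnDr modn_small; [case_ifs; lia | lia].
Qed.
End Offset.

Section Schedule.
Variables (n k : nat) (d : 'I_n -> 'I_k).

Definition stage_step (y : config n) (t : nat) : config n :=
  [ffun i => if d i == t :> nat then f160 y i else y i].

Fixpoint stage (x : config n) (t : nat) : config n :=
  if t is t'.+1 then stage_step (stage x t') t' else x.

Lemma f160_sched_stage x : f160_sched d x = stage x k.
Proof.
have -> : f160_sched d x = foldl stage_step x (iota 0 k).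
  rewrite /f160_sched -val_enum_ord.
  by elim: (enum 'I_k) x => [|j s IH] x //=.
elim: {1 2}k => [|t IH] //.
by rewrite -addn1 iotaD foldl_cat IH add0n addn1.
Qed.

Lemma stage_before x t i : t <= d i -> stage x t i = x i.
Proof.
elim: t => [|t IH] le_t //=; rewrite ffunE.
have -> : (d i == t :> nat) = false by apply/eqP; lia.
by apply: IH; lia.
Qed.

Lemma stage_after x t i : d i < t -> stage x t i = stage x (d i).+1 i.
Proof.
elim: t => [|t IH] lt_t //.
have [<- //|ne] := eqVneq (d i : nat) t.
by rewrite /= ffunE (negbTE ne) IH //; lia.
Qed.

Lemma f160_schedE x i :
  let y := f160_sched d x in
  y i = (if d (prv i) < d i then y (prv i) else x (prv i)) &&
        (if d (nxt i) < d i then y (nxt i) else x (nxt i)).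
Proof.
move=> y.
have yE j : y j = stage x (d j).+1 j by rewrite /y f160_sched_stage stage_after.
have stageE j : stage x (d i) j = if d j < d i then y j else x j.
  by case: ltnP => h; [rewrite yE stage_after | rewrite stage_before].
by rewrite yE /= ffunE eqxx /f160 ffunE !stageE.
Qed.

Definition mirror_cfg (x : config n) : config n := [ffun i => x (mirror i)].

Lemma mirror_cfgK : involutive mirror_cfg.
Proof. by move=> x; apply/ffunP => i; rewrite !ffunE mirrorK. Qed.

Lemma f160_sched_mirror x :
  f160_sched (d \o @mirror n) (mirror_cfg x) = mirror_cfg (f160_sched d x).
Proof.
rewrite /f160_sched; elim: (enum 'I_k) x => [|j s IH] x //=; rewrite -IH.
by congr foldl; apply/ffunP => i; rewrite !ffunE prv_mirror nxt_mirror andbC.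
Qed.
End Schedule.

Lemma eq_sched_mirror n k k' (d : 'I_n -> 'I_k) (d' : 'I_n -> 'I_k') :
  f160_sched d =1 f160_sched d' -> f160_sched (d \o @mirror n) =1 f160_sched (d' \o @mirror n).
Proof. by move=> eq_sched x; rewrite -[x]mirror_cfgK !f160_sched_mirror eq_sched. Qed.

Section Run.
Variables (n k : nat) (d : 'I_n -> 'I_k) (s : 'I_n -> 'I_n).

Fixpoint run (fuel : nat) (i : 'I_n) : nat :=
  if fuel is f.+1 then (if d (s i) < d i then (run f (s i)).+1 else 0) else 0.

Lemma run_le f i : run f i <= f.
Proof. by elim: f i => [|f IH] i //=; case: ifP => // _; apply: IH. Qed.

Lemma run_drop f i t : t <= run f i -> d (iter t s i) + t <= d i.
Proof.
elim: f i t => [|f IH] i [|t] //=; rewrite ?addn0 //.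
case: ifP => // lt_s; rewrite ltnS => /IH; rewrite -iterSr iterS; lia.
Qed.

Lemma run_desc f i t : t < run f i -> d (s (iter t s i)) < d (iter t s i).
Proof.
elim: f i t => [|f IH] i t //=.
by case: ifP => // lt_s; case: t => [|t] //=; rewrite ltnS => /IH; rewrite -iterSr iterS.
Qed.

Lemma run_stable f i : run f i < f -> run f.+1 i = run f i.
Proof. by elim: f i => [|f IH] i //=; case: ifP => // _; rewrite ltnS => /IH /= ->. Qed.

(* Fuel n suffices: a chain of strictly earlier updates cannot close up around
   the cycle. *)
Definition run_len i := run n i.

Hypothesis iter_s_n : forall i, iter n s i = i.

Lemma run_len_lt i : run_len i < n.
Proof.
rewrite ltn_neqAle run_le andbT; apply/eqP => full.
have := @run_drop n i n; rewrite -/(run_len i) full iter_s_n leqnn.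
by have := ord_pos i; lia.
Qed.

Lemma run_lenE i : run_len i = if d (s i) < d i then (run_len (s i)).+1 else 0.
Proof.
have n_gt0 := ord_pos i.
rewrite /run_len -[X in run X i](prednK n_gt0) /=; case: ifP => // lt_s.
congr _.+1; rewrite -[in RHS](prednK n_gt0); apply/esym/run_stable.
rewrite ltn_neqAle run_le andbT.
apply/eqP => full; have := @run_drop n.-1 (s i) n.-1.
by rewrite full leqnn -iterSr prednK // iter_s_n; lia.
Qed.

Lemma run_len_full i : 1 < n -> run_len i = n.-1 -> d (iter n.-1 s i) < d i.
Proof. by move=> lt1n full; have := @run_drop n i n.-1; rewrite -/(run_len i) full leqnn; lia. Qed.
End Run.

Section Dependency.
Variables (n k : nat) (d : 'I_n -> 'I_k).
Implicit Types i j p : 'I_n.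

Definition after_prv i := d (prv i) < d i.
Definition after_nxt i := d (nxt i) < d i.

Definition lrun i := run_len d (@prv n) i.
Definition rrun i := run_len d (@nxt n) i.

Lemma lrunE i : lrun i = if after_prv i then (lrun (prv i)).+1 else 0.
Proof. exact/run_lenE/iter_prv_n. Qed.
Lemma rrunE i : rrun i = if after_nxt i then (rrun (nxt i)).+1 else 0.
Proof. exact/run_lenE/iter_nxt_n. Qed.

Lemma lrun_lt i : lrun i < n.
Proof. exact/run_len_lt/iter_prv_n. Qed.
Lemma rrun_lt i : rrun i < n.
Proof. exact/run_len_lt/iter_nxt_n. Qed.

Lemma lrun_gt0 i : (0 < lrun i) = after_prv i.
Proof. by rewrite lrunE; case: ifP. Qed.
Lemma rrun_gt0 i : (0 < rrun i) = after_nxt i.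
Proof. by rewrite rrunE; case: ifP. Qed.

Definition single_zero p : config n := [ffun j => j != p].

(* Offsets o = p - i (mod n) of the cells p on which the value at cell i depends,
   given m = lrun i and r = rrun i: left_dep is {-(m+1)} together with
   [-(m-1), 0] when m > 0, right_dep is [0, r-1] together with {r+1}. *)
Definition left_dep (m o : nat) : Prop := (o = 0 /\ 0 < m) \/ n < o + m \/ o + m.+1 = n.
Definition right_dep (r o : nat) : Prop := o < r \/ o = r.+1.
Definition dep (m r o : nat) : Prop := left_dep m o \/ right_dep r o.

Lemma f160_sched_single_zero p i : 1 < n ->
  f160_sched d (single_zero p) i = false <-> dep (lrun i) (rrun i) (offset i p).
Proof.
move=> lt1n; set y := f160_sched d _.
suff claim t : d i < t -> (y i = false <-> dep (lrun i) (rrun i) (offset i p)).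
  exact: claim (ltnSn _).
elim: t i => [|t IH] i // lt_t.
have left_false : (if d (prv i) < d i then y (prv i) else single_zero p (prv i)) = false
                  <-> left_dep (lrun i) (offset i p).
  rewrite (lrunE i) /after_prv; case: ifP => lt_prv.
    rewrite IH; last by lia.
    rewrite /dep (rrunE (prv i)) /after_nxt prvK ltnNge (ltnW lt_prv) /= offset_prv.
    by have := lrun_lt (prv i); have := offset_lt i p; rewrite /left_dep /right_dep; case_ifs; lia.
  by rewrite ffunE prv_eq_offset; have := offset_lt i p; rewrite /left_dep; case_ifs; lia.
have right_false : (if d (nxt i) < d i then y (nxt i) else single_zero p (nxt i)) = false
                   <-> right_dep (rrun i) (offset i p).
  rewrite (rrunE i) /after_nxt; case: ifP => lt_nxt.
    rewrite IH; last by lia.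
    rewrite /dep (lrunE (nxt i)) /after_prv nxtK ltnNge (ltnW lt_nxt) /= offset_nxt.
    by have := rrun_lt (nxt i); have := offset_lt i p; rewrite /left_dep /right_dep; case_ifs; lia.
  by rewrite ffunE nxt_eq_offset //; have := offset_lt i p; rewrite /right_dep; case_ifs; lia.
rewrite /y f160_schedE -/y /dep -left_false -right_false.
by case: (if _ then _ else _); case: (if _ then _ else _); intuition.
Qed.
End Dependency.

Definition dep_equiv n (m r m' r' : nat) := forall o, o < n -> dep n m r o <-> dep n m' r' o.

Lemma dep_equiv_no_left n m r r' : 6 < n -> 0 < m -> m < n -> r < n -> r'.+1 < n ->
  dep_equiv n m r 0 r' -> (m = 2 \/ m = 3) /\ r = r' /\ n <= r + 4.
Proof.
move=> lt6n; have [N ->] : exists N, n = N + 7 by exists (n - 7); lia.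
move=> m_gt0 lt_m lt_r lt_r' eqv.
have at_o o : o < N + 7 -> _ := fun lt_o => eqv o lt_o.
rewrite /dep /left_dep /right_dep in at_o.
have at_Np6 : 2 <= m \/ r = N + 5.
  by have := at_o (N + 6) ltac:(lia); clear -m_gt0 lt_m lt_r lt_r'; lia.
have at_2 : (m = N + 6 \/ m = N + 4 \/ 2 < r \/ r = 1) <-> (2 < r' \/ r' = 1).
  by have := at_o 2 ltac:(lia); clear -m_gt0 lt_m lt_r lt_r'; lia.
have at_Np5 : (3 <= m \/ m = 1 \/ r = N + 6 \/ r = N + 4) <-> r' = N + 4.
  by have := at_o (N + 5) ltac:(lia); clear -m_gt0 lt_m lt_r lt_r'; lia.
have at_Np4 : (4 <= m \/ m = 2 \/ N + 4 < r \/ r = N + 3) <-> (N + 4 < r' \/ r' = N + 3).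
  by have := at_o (N + 4) ltac:(lia); clear -m_gt0 lt_m lt_r lt_r'; lia.
have at_Np3 : (5 <= m \/ m = 3 \/ N + 3 < r \/ r = N + 2) <-> (N + 3 < r' \/ r' = N + 2).
  by have := at_o (N + 3) ltac:(lia); clear -m_gt0 lt_m lt_r lt_r'; lia.
have at_r : (r = 0 \/ N + 7 < r + m \/ r + m.+1 = N + 7) <-> (r = N + 6 \/ r < r' \/ r = r'.+1).
  by have := at_o r ltac:(lia); clear -m_gt0 lt_m lt_r lt_r'; lia.
clear at_o eqv.
have ge_r' : N + 3 <= r' by clear -at_Np5 at_Np4 m_gt0; lia.
have [m2|m3] : m = 2 \/ m = 3 by clear -at_Np6 at_Np5 at_Np4 ge_r' m_gt0; lia.
- subst m; have [r'3|r'5] : r' = N + 3 \/ r' = N + 5 by clear -at_Np4 ge_r' lt_r'; lia.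
  + by subst r'; clear -at_2 at_Np5 at_Np3 at_r lt_r; lia.
  + by subst r'; clear -at_2 at_Np5 at_Np3 at_r lt_r; lia.
- subst m; have r'4 : r' = N + 4 by clear -at_Np5; lia.
  by subst r'; clear -at_2 at_Np4 at_r lt_r; lia.
Qed.

Lemma dep_equiv_short_left n m m' r' : 6 < n -> 0 < m <= 2 ->
  (r' = 0 \/ n <= r' + 3) -> dep_equiv n m 0 m' r' -> r' = 0 /\ 0 < m'.
Proof.
move=> lt6n /andP[m_gt0 le_m2] r'_extreme eqv.
have := eqv 0 ltac:(lia); have := eqv 2 ltac:(lia); rewrite /dep /left_dep /right_dep.
lia.
Qed.

(* The shape around i of a schedule in which the label of the arc (i-1, i) can be
   flipped without changing the global function; rflip_shape is its mirror image. *)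
Definition lflip_shape n k (d : 'I_n -> 'I_k) i :=
  [/\ after_prv d (prv i), ~~ after_nxt d (prv i) &
      forall t, t + 4 < n -> after_nxt d (iter t (@nxt n) i)].

Definition rflip_shape n k (d : 'I_n -> 'I_k) i :=
  [/\ after_nxt d (nxt i), ~~ after_prv d (nxt i) &
      forall t, t + 4 < n -> after_prv d (iter t (@prv n) i)].

Lemma after_prv_mirror n k (d : 'I_n -> 'I_k) i :
  after_prv (d \o @mirror n) i = after_nxt d (mirror i).
Proof. by rewrite /after_prv /after_nxt /= nxt_mirror. Qed.

Lemma after_nxt_mirror n k (d : 'I_n -> 'I_k) i :
  after_nxt (d \o @mirror n) i = after_prv d (mirror i).
Proof. by rewrite /after_prv /after_nxt /= prv_mirror. Qed.

Lemma lflip_shape_mirror n k (d : 'I_n -> 'I_k) i :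
  lflip_shape (d \o @mirror n) (mirror i) <-> rflip_shape d i.
Proof.
rewrite /lflip_shape prv_mirror after_prv_mirror after_nxt_mirror mirrorK.
split=> -[a na desc]; split=> // t /desc;
  by rewrite ?iter_nxt_mirror ?after_nxt_mirror ?mirrorK.
Qed.

Section TwoSchedules.
Variables (n k k' : nat) (d : 'I_n -> 'I_k) (d' : 'I_n -> 'I_k').
Hypothesis eq_sched : f160_sched d =1 f160_sched d'.

Lemma dep_equiv_of_sched i : 1 < n ->
  dep_equiv n (lrun d i) (rrun d i) (lrun d' i) (rrun d' i).
Proof.
move=> lt1n o lt_o; have := offset_iter i lt_o.
set p := iter o _ i => <-.
by rewrite -!f160_sched_single_zero // eq_sched.
Qed.

Lemma after_prv_flip_shape i : 6 < n -> after_prv d i -> ~~ after_prv d' i ->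
  lflip_shape d i /\ lflip_shape d' i.
Proof.
move=> lt6n a_d na_d'; have lt1n : 1 < n by lia.
have lrun'_0 : lrun d' i = 0 by rewrite lrunE (negbTE na_d').
have lrun_pos : 0 < lrun d i by rewrite lrun_gt0.
have lt_rrun' : (rrun d' i).+1 < n.
  have := rrun_lt d' i; case: (altP (rrun d' i =P n.-1)) => [full|]; last by lia.
  by have := run_len_full lt1n full; rewrite iter_nxt_pred -/(after_prv d' i) (negbTE na_d').
have [lrun23 [eq_rrun ge_rrun]] :
    (lrun d i = 2 \/ lrun d i = 3) /\ rrun d i = rrun d' i /\ n <= rrun d i + 4.
  apply: dep_equiv_no_left => //; [exact: lrun_lt | exact: rrun_lt |].
  by rewrite -lrun'_0; exact: dep_equiv_of_sched.
have lrun_c : lrun d i = (lrun d (prv i)).+1 by rewrite lrunE a_d.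
have rrun_c : rrun d (prv i) = 0 by rewrite rrunE /after_nxt prvK ltnNge (ltnW a_d).
have rrun'_c : rrun d' (prv i) = 0 \/ n <= rrun d' (prv i) + 3.
  by rewrite rrunE prvK; case: ifP; lia.
have [rrun'_c0 lrun'_c] : rrun d' (prv i) = 0 /\ 0 < lrun d' (prv i).
  apply: (@dep_equiv_short_left n (lrun d (prv i))) => //; first by apply/andP; lia.
  by rewrite -rrun_c; exact: dep_equiv_of_sched.
split; split.
- by rewrite -lrun_gt0; lia.
- by rewrite -rrun_gt0 rrun_c.
- move=> t lt_t; apply: (@run_desc _ _ d _ n).
  by rewrite -/(run_len d _ i) -/(rrun d i); lia.
- by rewrite -lrun_gt0.
- by rewrite -rrun_gt0 rrun'_c0.
- move=> t lt_t; apply: (@run_desc _ _ d' _ n).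
  by rewrite -/(run_len d' _ i) -/(rrun d' i); lia.
Qed.
End TwoSchedules.

Lemma prv_flip_shape n k k' (d : 'I_n -> 'I_k) (d' : 'I_n -> 'I_k') i :
  f160_sched d =1 f160_sched d' -> 6 < n -> after_prv d i != after_prv d' i -> lflip_shape d i.
Proof.
move=> eq_sched lt6n.
case: (boolP (after_prv d i)) => a; case: (boolP (after_prv d' i)) => a' //= _.
  exact: (after_prv_flip_shape eq_sched lt6n a a').1.
have eq_sched' : f160_sched d' =1 f160_sched d by move=> x; rewrite eq_sched.
exact: (after_prv_flip_shape eq_sched' lt6n a' a).2.
Qed.

Lemma nxt_flip_shape n k k' (d : 'I_n -> 'I_k) (d' : 'I_n -> 'I_k') i :
  f160_sched d =1 f160_sched d' -> 6 < n -> after_nxt d i != after_nxt d' i -> rflip_shape d i.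
Proof.
move=> eq_sched lt6n flip; apply/lflip_shape_mirror.
by apply: (prv_flip_shape (eq_sched_mirror eq_sched) lt6n); rewrite !after_prv_mirror mirrorK.
Qed.

Lemma after_nxt_after_prv n k (d : 'I_n -> 'I_k) x :
  after_nxt d x -> after_prv d (nxt x) = false.
Proof. by rewrite /after_nxt /after_prv nxtK => lt; apply/negbTE; rewrite -leqNgt ltnW. Qed.

Section Shapes.
Variables (n k : nat) (d : 'I_n -> 'I_k).

Lemma lflip_shape_uniq i j : 6 < n -> lflip_shape d i -> lflip_shape d j -> i = j.
Proof.
move=> lt6n [_ na_i desc_i] [_ na_j desc_j].
have := iter_offset i j; have := offset_lt i j.
case: (offset i j) => [|r] // lt_r def_j; exfalso.
have [short|long] := ltnP (r + 4) n.
- by move: na_j; rewrite -def_j iterS nxtK desc_i.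
- move: na_i; rewrite -iter_nxt_pred.
  have -> : n.-1 = (n.-1 - r.+1) + r.+1 by lia.
  by rewrite iterD def_j desc_j //; lia.
Qed.

Lemma lflip_after_prv_sub i :
  lflip_shape d i -> [set x | after_prv d x] \subset [set iter (n - t) (@nxt n) i | t : 'I_4].
Proof.
case=> _ _ desc; apply/subsetP => x; rewrite inE => a_x.
have def_px := iter_offset i (prv x); have lt_o := offset_lt i (prv x).
have long : n <= offset i (prv x) + 4.
  rewrite leqNgt; apply/negP => /desc.
  by rewrite def_px => /after_nxt_after_prv; rewrite prvK a_x.
have lt4 : n - (offset i (prv x)).+1 < 4 by lia.
by apply/imsetP; exists (Ordinal lt4) => //=; rewrite subKn // iterS def_px prvK.
Qed.

Lemma rflip_not_after_prv_sub j :
  rflip_shape d j -> [set x | ~~ after_prv d x] \subset [set iter t.+1 (@nxt n) j | t : 'I_4].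
Proof.
case=> _ _ desc; apply/subsetP => x; rewrite inE => na_x.
have def_j := iter_offset x j; have lt_o := offset_lt x j.
have def_x : iter (offset x j) (@prv n) j = x by rewrite -{2}def_j iter_prv_nxt.
have long : n <= offset x j + 4.
  by rewrite leqNgt; apply/negP => /desc; rewrite def_x (negbTE na_x).
have lt4 : n - (offset x j).+1 < 4 by lia.
apply/imsetP; exists (Ordinal lt4) => //=.
by rewrite -iterS subnSK // -{2}def_j -iterD subnK ?iter_nxt_n // ltnW.
Qed.

Lemma lflip_rflip_shape i j : 8 < n -> lflip_shape d i -> rflip_shape d j -> False.
Proof.
move=> lt8n /lflip_after_prv_sub/subset_leq_card le_i.
move=> /rflip_not_after_prv_sub/subset_leq_card le_j.
have := cardsC [set x | after_prv d x].
have -> : ~: [set x | after_prv d x] = [set x | ~~ after_prv d x] by apply/setP => x; rewrite !inE.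
have := leq_trans le_i (leq_imset_card _ _); have := leq_trans le_j (leq_imset_card _ _).
rewrite !card_ord; lia.
Qed.
End Shapes.

Lemma rflip_shape_uniq n k (d : 'I_n -> 'I_k) i j :
  6 < n -> rflip_shape d i -> rflip_shape d j -> i = j.
Proof.
move=> lt6n sh_i sh_j; apply: (can_inj (@mirrorK n)).
by apply: (lflip_shape_uniq (d := d \o @mirror n) lt6n); apply/lflip_shape_mirror.
Qed.

Lemma lab_to_nxt n k (d : 'I_n -> 'I_k) i : lab d i (nxt i) = ~~ after_prv d (nxt i).
Proof. by rewrite /lab /after_prv nxtK leqNgt. Qed.

Lemma lab_from_nxt n k (d : 'I_n -> 'I_k) i : lab d (nxt i) i = ~~ after_nxt d i.
Proof. by rewrite /lab /after_nxt leqNgt. Qed.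

Section Flips.
Variables (n k k' : nat) (d : 'I_n -> 'I_k) (d' : 'I_n -> 'I_k').

Definition prv_flips := [set i | after_prv d i != after_prv d' i].
Definition nxt_flips := [set i | after_nxt d i != after_nxt d' i].

Lemma n_diff_arcsE : n_diff_arcs d d' = #|prv_flips| + #|nxt_flips|.
Proof.
rewrite /n_diff_arcs -(card_preimset prv_flips (@nxt_inj n)).
congr (_ + _); apply: eq_card => i.
  by rewrite !inE !lab_to_nxt (inj_eq negb_inj).
by rewrite !inE !lab_from_nxt (inj_eq negb_inj).
Qed.

Lemma flips_exist : ~ sched_equiv d d' -> 0 < #|prv_flips| + #|nxt_flips|.
Proof.
rewrite lt0n addn_eq0 !cards_eq0 => not_equiv.
apply/negP => /andP[/eqP no_prv /eqP no_nxt].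
apply: not_equiv => i; rewrite !lab_to_nxt !lab_from_nxt.
have := in_set0 (nxt i); have := in_set0 i; rewrite -{1}no_nxt -no_prv !inE.
by move=> /negbFE/eqP-> /negbFE/eqP->.
Qed.

Hypothesis eq_sched : f160_sched d =1 f160_sched d'.

Lemma card_prv_flips_le1 : 6 < n -> #|prv_flips| <= 1.
Proof.
move=> lt6n; apply/card_le1_eqP => i j; rewrite !inE.
move=> /(prv_flip_shape eq_sched lt6n)-sh_i /(prv_flip_shape eq_sched lt6n)-sh_j.
exact: lflip_shape_uniq sh_j sh_i.
Qed.

Lemma card_nxt_flips_le1 : 6 < n -> #|nxt_flips| <= 1.
Proof.
move=> lt6n; apply/card_le1_eqP => i j; rewrite !inE.
move=> /(nxt_flip_shape eq_sched lt6n)-sh_i /(nxt_flip_shape eq_sched lt6n)-sh_j.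
exact: rflip_shape_uniq sh_j sh_i.
Qed.

Lemma flips_one_side : 8 < n -> (#|prv_flips| == 0) || (#|nxt_flips| == 0).
Proof.
move=> lt8n; rewrite !cards_eq0; apply/norP => -[/set0Pn[i] + /set0Pn[j]].
rewrite !inE => /(prv_flip_shape eq_sched (ltnW (ltnW lt8n)))-sh_i.
move=> /(nxt_flip_shape eq_sched (ltnW (ltnW lt8n)))-sh_j.
exact: lflip_rflip_shape lt8n sh_i sh_j.
Qed.
End Flips.

Theorem mainTheorem20 (n : nat) (hn : 8 < n) (k k' : nat)
  (d : 'I_n -> 'I_k) (d' : 'I_n -> 'I_k') :
  ordered_partition d -> ordered_partition d' ->
  special160 d d' ->
  n_diff_arcs d d' = 1.
Proof.
move=> _ _ [not_equiv eq_sched]; have lt6n : 6 < n by lia.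
have := flips_exist not_equiv; have := flips_one_side eq_sched hn.
have := card_prv_flips_le1 eq_sched lt6n; have := card_nxt_flips_le1 eq_sched lt6n.
by rewrite n_diff_arcsE; lia.
Qed.
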